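(* Let $G=(V,E)$ be a digraph and let $(X,T)$ be a tree decomposition of its underlying undirected graph, with bags $X_1,\dots,X_n$. For each bag $X_i$ let $V_i=X_i\cup\{u\in V:(u,v)\in E\text{ for some }v\in X_i\}$ be the set of vertices of $X_i$ together with all their in-neighbors. Then for every $v\in V$, the set $X^v=\{X_i: v\in V_i\}$ of bags forms a connected subtree of $T$.
   Context: A tree decomposition of an undirected graph $H$ is a pair $(X,T)$ where $X=\{X_1,\dots,X_n\}$ is a collection of vertex subsets and $T$ is a tree on $X$ such that: every vertex lies in some $X_i$; for every edge $\{u,v\}$ some $X_i$ contains both $u$ and $v$; and for every vertex $v$ the bags containing $v$ form a connected subtree of $T$. The underlying graph of a digraph is obtained by treating arcs as undirected edges. *)

From mathcomp Require Import all_boot.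
Set Implicit Arguments. Unset Strict Implicit. Unset Printing Implicit Defensive.

Definition simple_graph (I : finType) (T : rel I) : Prop :=
  symmetric T /\ irreflexive T.

Definition is_tree (I : finType) (T : rel I) : Prop :=
  [/\ simple_graph T, 0 < #|I|,
      (forall x y : I, connect T x y) &
      (forall s : seq I, uniq s -> 3 <= size s -> ~~ cycle T s)].

Definition connected_subtree (I : finType) (T : rel I) (S : {set I}) : Prop :=
  S != set0 /\
  (forall x y, x \in S -> y \in S ->
     connect [rel a b | [&& a \in S, b \in S & T a b]] x y).

Definition tree_decomposition (V I : finType) (E : rel V)
    (bag : I -> {set V}) (T : rel I) : Prop :=
  [/\ is_tree T,
      (forall v : V, exists i, v \in bag i),
      (forall u v : V, E u v || E v u -> exists i, (u \in bag i) && (v \in bag i)) &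
      (forall v : V, connected_subtree T [set i | v \in bag i])].

Definition ext_bag (V I : finType) (E : rel V) (bag : I -> {set V}) (i : I)
    : {set V} :=
  bag i :|: [set u | [exists v in bag i, E u v]].

From mathcomp Require Import all_boot.
Set Implicit Arguments. Unset Strict Implicit. Unset Printing Implicit Defensive.

(* Write X^w for the set of bags containing w. For every out-neighbour w of v,
   X^w is a connected subtree lying inside {i | v \in V_i} and meeting X^v (an
   edge bag holds both v and w). Hence every node of {i | v \in V_i} is joined
   inside it to a fixed node of X^v. *)

Section InducedConnectivity.

Variables (I : finType) (T : rel I).

Definition induced_rel (S : {set I}) : rel I :=
  [rel a b | [&& a \in S, b \in S & T a b]].

Lemma induced_rel_sym S : symmetric T -> symmetric (induced_rel S).
Proof. by move=> symT a b; rewrite /induced_rel /= (symT a) andbCA. Qed.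

Lemma connect_induced_subset (A S : {set I}) x y :
  A \subset S -> connect (induced_rel A) x y -> connect (induced_rel S) x y.
Proof.
move=> /subsetP sAS; apply: connect_sub => a b /and3P[aA bA Tab].
by apply: connect1; rewrite /induced_rel /= Tab !sAS.
Qed.

Lemma connected_subtree_connect (A S : {set I}) x y :
  connected_subtree T A -> A \subset S -> x \in A -> y \in A ->
  connect (induced_rel S) x y.
Proof. by move=> [_ conA] sAS xA yA; exact: connect_induced_subset (conA x y xA yA). Qed.

Lemma connected_subtree_rooted (S : {set I}) i0 :
  symmetric T -> i0 \in S ->
  (forall x, x \in S -> connect (induced_rel S) x i0) ->
  connected_subtree T S.
Proof.
move=> symT i0S to_root; split; first by apply/set0Pn; exists i0.
move=> x y xS yS; apply: connect_trans (to_root x xS) _.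
by rewrite (sym_connect_sym (induced_rel_sym S symT)) to_root.
Qed.

End InducedConnectivity.

Section ExtendedBags.

Variables (V I : finType) (E : rel V) (bag : I -> {set V}).

Lemma bag_sub_ext_bag v :
  [set i | v \in bag i] \subset [set i | v \in ext_bag E bag i].
Proof. by apply/subsetP => i; rewrite !inE => ->. Qed.

Lemma out_neighbour_bag_sub_ext_bag v w : E v w ->
  [set i | w \in bag i] \subset [set i | v \in ext_bag E bag i].
Proof.
move=> Evw; apply/subsetP => i; rewrite !inE => wi.
by apply/orP; right; apply/existsP; exists w; rewrite wi.
Qed.

Lemma in_ext_bagP v i :
  reflect (v \in bag i \/ exists2 w, w \in bag i & E v w) (v \in ext_bag E bag i).
Proof.
rewrite !inE; apply: (iffP orP) => [[|/existsP[w /andP[]]]|[|[w wi Evw]]].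
- by left.
- by right; exists w.
- by left.
- by right; apply/existsP; exists w; rewrite wi.
Qed.

End ExtendedBags.

Theorem lemmaA1 (V I : finType) (E : rel V) (bag : I -> {set V}) (T : rel I) :
  tree_decomposition E bag T ->
  forall v : V, connected_subtree T [set i | v \in ext_bag E bag i].
Proof.
case=> [[[symT _] _ _ _] cover edge_bag subtree] v.
have [i0 vi0] := cover v.
have join_v := connected_subtree_connect (subtree v) (bag_sub_ext_bag E bag v).
apply: (connected_subtree_rooted (i0 := i0)) => //.
  by rewrite inE; apply/in_ext_bagP; left.
move=> x; rewrite inE => /in_ext_bagP[vx | [w wx Evw]].
  by apply: join_v; rewrite inE.
have [j /andP[vj wj]] : exists j, (v \in bag j) && (w \in bag j).
  by apply: edge_bag; rewrite Evw.
have join_w := connected_subtree_connect (subtree w)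
  (out_neighbour_bag_sub_ext_bag bag Evw).
by apply: (connect_trans (y := j)); [apply: join_w | apply: join_v]; rewrite inE.
Qed.
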